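(* Let $M$ be an $\mathbf{FB}$-module and $a:\mathrm{Sym}(\mathbf V)\otimes M\to\mathrm{Sym}(\mathbf V)\otimes M$ a map, with associated symmetric operation $\phi$ given by $a(t^B\otimes x)=\sum_{A\subseteq S}t^A\otimes\phi^S_{A,B}(x)$ for $B\subseteq S$, $x\in M(S\setminus B)$. Then $a$ defines a representation of $\underline{\mathfrak a}(\mathbf V\oplus\mathbf V^* )$ if and only if $\phi$ satisfies the following for all finite sets $S$ and subsets $A,B,C,D\subseteq S$ with $A\cap B=\emptyset$, $C\cap D=\emptyset$: (B1) if $A\cap C=B\cap D=\emptyset$, then $\phi^{S\setminus C}_{D,A}\circ\phi^{S\setminus A}_{C,B}=\phi^{S\setminus D}_{C,B}\circ\phi^{S\setminus B}_{D,A}$; (B2) if $A\cap C=\emptyset$ and $B\cap D\ne\emptyset$, then $\phi^{S\setminus C}_{D,A}\circ\phi^{S\setminus A}_{C,B}=\sum_{\emptyset\ne X\subseteq B\cap D}\phi^{S\setminus X}_{(D\setminus X)\cup C,\,A\cup(B\setminus X)}$; (B3) if $A\cap C\ne\emptyset$ and $B\cap D\ne\emptyset$, then $\sum_{X\subseteq B\cap D}\phi^{S\setminus X}_{(D\setminus X)\cup C,\,A\cup(B\setminus X)}=\sum_{X\subseteq A\cap C}\phi^{S\setminus X}_{(C\setminus X)\cup D,\,B\cup(A\setminus X)}$.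
   Context: $k$ is a commutative ring; $\mathbf{FB}$-modules are functors from finite sets and bijections to $k$-modules, $(M\otimes N)(S)=\bigoplus_{T\subseteq S}M(T)\otimes N(S\setminus T)$, symmetry $\tau$. $\mathbf V$ is $k$ on singletons, $0$ otherwise. $P=\mathrm{Sym}(\mathbf V)=\bigoplus_n\mathrm{Sym}^n(\mathbf V)$ with $\mathrm{Sym}^n(\mathbf V)(S)$ free on $t^S$ if $|S|=n$ and $0$ otherwise, so $(P\otimes M)(S)=\bigoplus_{B\subseteq S}t^B\otimes M(S\setminus B)$; divided powers are identified with $P$ via the averaging isomorphism. $m(t^A\otimes t^B)=t^{A\cup B}$, $\Delta(t^B)=\sum_{B=B_1\sqcup B_2}t^{B_1}\otimes t^{B_2}$. $a$ is a representation of the curried Weyl Lie algebra $\underline{\mathfrak a}(\mathbf V\oplus\mathbf V^* )$ if $[a_1,a_2]=a'-a''$, where $a_2=\mathrm{id}_P\otimes a$, $a_1=\tau(\mathrm{id}_P\otimes a)\tau$, $[a_1,a_2]=a_1a_2-a_2a_1:P\otimes P\otimes M\to P\otimes P\otimes M$, $a'=(m\otimes\mathrm{id}\otimes\mathrm{id})(\mathrm{id}\otimes\Delta\otimes\mathrm{id})(\mathrm{id}_P\otimes a)(\mathrm{id}\otimes m\otimes\mathrm{id})(\tau\otimes\mathrm{id}\otimes\mathrm{id})(\mathrm{id}\otimes\Delta\otimes\mathrm{id})$, $a''=\tau a'\tau$. The maps $\phi^S_{A,B}:M(S\setminus B)\to M(S\setminus A)$ are natural in bijections. *)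

(* Finite sets are modelled as {fset nat}; every
   finite set is in bijection with one of these, so FB is (equivalent to) the
   groupoid of finite subsets of nat and bijections between them. *)
From HB Require Import structures.
From mathcomp Require Import all_boot all_order all_algebra.
From mathcomp Require Import finmap.
Set Implicit Arguments. Unset Strict Implicit. Unset Printing Implicit Defensive.
Import GRing.Theory.
Local Open Scope fset_scope.
Local Open Scope ring_scope.

Section FB.
Variable k : comPzRingType.
Variable M : {fset nat} -> lmodType k.

(* Transport along an equality of finite sets (identity when S = T; never used
   in the statement for S <> T, where it is 0). *)
Definition mcast (S T : {fset nat}) (x : M S) : M T :=
  match S =P T with
  | ReflectT e => eq_rect S (fun X => M X) x T e
  | ReflectF _ => 0
  end.
Arguments mcast {S T} x.

Definition bij_on (f : nat -> nat) (S T : {fset nat}) : Prop :=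
  {in S &, injective f} /\ [fset f x | x in S] = T.

Definition fimg (f : nat -> nat) (A : {fset nat}) : {fset nat} :=
  [fset f x | x in A].

(* FB-module structure: Mact S T f : M S -> M T is M(f) for a bijection
   f : S -> T. *)
Definition isFBmod
  (Mact : forall S T : {fset nat}, (nat -> nat) -> M S -> M T) : Prop :=
  [/\ (forall S T f, bij_on f S T ->
         forall (c : k) (x y : M S), Mact S T f (c *: x + y) = c *: Mact S T f x + Mact S T f y),
      (forall S (x : M S), Mact S S id x = x),
      (forall S T U f g, bij_on f S T -> bij_on g T U ->
         forall x, Mact T U g (Mact S T f x) = Mact S U (g \o f) x) &
      (forall S T f g, {in S, f =1 g} -> forall x, Mact S T f x = Mact S T g x)].

(* (Sym(V) (x) M)(S) = (+)_{B <= S} t^B (x) M(S\B): an element is a family of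
   coefficients indexed by B (only B <= S is relevant). *)
Definition PM (S : {fset nat}) := forall B : {fset nat}, M (S `\` B).
(* (P (x) P (x) M)(S) = (+)_{B1,B2 <= S disjoint} t^B1 (x) t^B2 (x) M(S\(B1 u B2)) *)
Definition PPM (S : {fset nat}) := forall B1 B2 : {fset nat}, M (S `\` (B1 `|` B2)).
Definition PPPM (S : {fset nat}) :=
  forall B1 B2 B3 : {fset nat}, M (S `\` (B1 `|` B2 `|` B3)).

Variable a : forall S, PM S -> PM S.

Definition idPa S (f : PPM S) : PPM S :=
  fun B1 B2 => mcast (@a (S `\` B1) (fun B => mcast (f B1 B)) B2).
Definition tau2 S (f : PPM S) : PPM S := fun B1 B2 => mcast (f B2 B1).
Definition tau3 S (f : PPPM S) : PPPM S := fun B1 B2 B3 => mcast (f B2 B1 B3).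
(* id (x) Delta (x) id : t^B1 (x) t^B2 (x) x |-> sum_{B2 = Y1 u Y2} t^B1 (x) t^Y1 (x) t^Y2 (x) x *)
Definition idDelta S (f : PPM S) : PPPM S :=
  fun B1 Y1 Y2 => mcast (f B1 (Y1 `|` Y2)).
(* id (x) m (x) id : t^C (x) t^E1 (x) t^E2 (x) x |-> t^C (x) t^(E1 u E2) (x) x *)
Definition idm S (f : PPPM S) : PPM S :=
  fun C E => \sum_(E1 <- fpowerset E) mcast (f C E1 (E `\` E1)).
Definition midid S (f : PPPM S) : PPM S :=
  fun E C => \sum_(E1 <- fpowerset E) mcast (f E1 (E `\` E1) C).

Definition a2 S (f : PPM S) : PPM S := idPa f.
Definition a1 S (f : PPM S) : PPM S := tau2 (idPa (tau2 f)).
Definition a' S (f : PPM S) : PPM S :=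
  midid (idDelta (idPa (idm (tau3 (idDelta f))))).
Definition a'' S (f : PPM S) : PPM S := tau2 (a' (tau2 f)).

(* a is a representation of the curried Weyl Lie algebra:
   [a1, a2] = a' - a''  as maps  P (x) P (x) M -> P (x) P (x) M,
   compared on all (relevant) components (B1, B2 disjoint subsets of S). *)
Definition weyl_rep : Prop :=
  forall S (f : PPM S) (B1 B2 : {fset nat}),
    B1 `<=` S -> B2 `<=` S -> B1 `&` B2 = fset0 ->
    a1 (a2 f) B1 B2 - a2 (a1 f) B1 B2 = a' f B1 B2 - a'' f B1 B2.

End FB.
Arguments mcast {k M S T} x.

Section Phi.
Local Unset Implicit Arguments.
Variable k : comPzRingType.
Variable M : {fset nat} -> lmodType k.
Variable phi : forall S A B : {fset nat}, M (S `\` B) -> M (S `\` A).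

Definition disj (A B : {fset nat}) : bool := A `&` B == fset0.

Definition assoc_op (a : forall S, PM M S -> PM M S) : Prop :=
  forall S (f : PM M S) (A : {fset nat}), A `<=` S ->
    a S f A = \sum_(B <- fpowerset S) phi S A B (f B).

Definition phi_linear : Prop :=
  forall S A B (c : k) (x y : M (S `\` B)),
    phi S A B (c *: x + y) = c *: phi S A B x + phi S A B y.

Definition phi_natural (Mact : forall S T : {fset nat}, (nat -> nat) -> M S -> M T) : Prop :=
  forall S S' sigma A B, bij_on sigma S S' -> A `<=` S -> B `<=` S ->
    forall x : M (S `\` B),
      Mact (S `\` A) (S' `\` fimg sigma A) sigma (phi S A B x)
      = phi S' (fimg sigma A) (fimg sigma B) (Mact (S `\` B) (S' `\` fimg sigma B) sigma x).

(* All conditions below are equalities of maps M(S\(A u B)) -> M(S\(C u D));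
   mcast only identifies equal sets. *)
Definition condB1 : Prop :=
  forall S A B C D, A `<=` S -> B `<=` S -> C `<=` S -> D `<=` S ->
    disj A B -> disj C D -> disj A C -> disj B D ->
    forall x : M (S `\` (A `|` B)),
      (mcast (phi (S `\` C) D A (mcast (phi (S `\` A) C B (mcast x)))) : M (S `\` (C `|` D)))
      = mcast (phi (S `\` D) C B (mcast (phi (S `\` B) D A (mcast x)))).

Definition condB2 : Prop :=
  forall S A B C D, A `<=` S -> B `<=` S -> C `<=` S -> D `<=` S ->
    disj A B -> disj C D -> disj A C -> ~~ disj B D ->
    forall x : M (S `\` (A `|` B)),
      (mcast (phi (S `\` C) D A (mcast (phi (S `\` A) C B (mcast x)))) : M (S `\` (C `|` D)))
      = \sum_(X <- fpowerset (B `&` D) | X != fset0)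
          mcast (phi (S `\` X) ((D `\` X) `|` C) (A `|` (B `\` X)) (mcast x)).

Definition condB3 : Prop :=
  forall S A B C D, A `<=` S -> B `<=` S -> C `<=` S -> D `<=` S ->
    disj A B -> disj C D -> ~~ disj A C -> ~~ disj B D ->
    forall x : M (S `\` (A `|` B)),
      (\sum_(X <- fpowerset (B `&` D))
          mcast (phi (S `\` X) ((D `\` X) `|` C) (A `|` (B `\` X)) (mcast x))
        : M (S `\` (C `|` D)))
      = \sum_(X <- fpowerset (A `&` C))
          mcast (phi (S `\` X) ((C `\` X) `|` D) (B `|` (A `\` X)) (mcast x)).

End Phi.
Arguments disj : clear implicits.
Arguments assoc_op {k M} phi a.
Arguments phi_linear {k M} phi.
Arguments phi_natural {k M} phi Mact.
Arguments condB1 {k M} phi.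
Arguments condB2 {k M} phi.
Arguments condB3 {k M} phi.

(* The four operators a1 a2, a2 a1, a' and a'' on P (x) P (x) M act coefficientwise:
   the (B1, B2)-component of each is a sum, over disjoint pairs (P, Q), of a map
   M(S \ (P u Q)) -> M(S \ (B1 u B2)) applied to the (P, Q)-component.  Testing on
   the pure tensors t^P (x) t^Q (x) x shows that [a1, a2] = a' - a'' iff these
   coefficient maps satisfy c12 - c21 = c' - c''.  The composite c12 vanishes unless
   P n B2 = 0, c21 unless Q n B1 = 0, c' is the sum over X <= Q n B1 of
   phi^(S\X)_((B1\X) u B2, P u (Q\X)), and c'' is its mirror image; the X = 0 terms
   of c' and c'' agree.  According as P n B2 and Q n B1 are empty or not, the
   identity is exactly (B1), (B2), (B2) with the two tensor factors exchanged, or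
   (B3). *)

From HB Require Import structures.
From mathcomp Require Import all_boot all_order all_algebra.
From mathcomp Require Import finmap.
Set Implicit Arguments. Unset Strict Implicit. Unset Printing Implicit Defensive.
Import GRing.Theory.
Local Open Scope fset_scope.
Local Open Scope ring_scope.

Lemma disj_memF (A B : {fset nat}) x : disj A B -> (x \in A) && (x \in B) = false.
Proof. by move=> /eqP AB0; rewrite -in_fsetI AB0 inE. Qed.

Lemma disjC (A B : {fset nat}) : disj A B = disj B A.
Proof. exact: fdisjoint_sym. Qed.

(* Every side condition between finite sets is checked elementwise: it becomes
   a propositional tautology in the memberships of one fresh element. *)
Ltac fset_solve :=
  let x := fresh "x" in
  match goal with
  | |- @eq _ _ _ => apply/fsetP => x
  | |- is_true (fsubset _ _) => apply/fsubsetP => x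
  | |- is_true (disj _ _) => apply/eqP/fsetP => x
  end;
  repeat match goal with
  | H : is_true (fsubset _ _) |- _ => move: (fsubsetP H x); clear H
  | H : is_true (disj _ _) |- _ => move: (@disj_memF _ _ x H); clear H
  | H : is_true (~~ disj _ _) |- _ => clear H
  end;
  rewrite ?inE;
  repeat match goal with |- context [?y \in ?X] =>
    let h := fresh in case h: (y \in X); rewrite ?h; clear h end;
  cbn; unfold is_true; intuition congruence.

Lemma eqb_iff (T U : eqType) (x y : T) (u v : U) : (x == y) = (u == v) -> x = y <-> u = v.
Proof. by move=> e; split=> /eqP; [rewrite e | rewrite -e] => /eqP. Qed.

Section Cast.
Context {k : comPzRingType} {M : {fset nat} -> lmodType k}.

Lemma mcast_id S (x : M S) : mcast x = x.
Proof. by rewrite /mcast; case: eqP => // e; rewrite (eq_irrelevance e erefl). Qed.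

Lemma mcastK S T U (x : M S) : S = T -> (mcast (mcast x : M T) : M U) = mcast x.
Proof. by move=> e; subst T; rewrite mcast_id. Qed.

Lemma eq_mcast S T (x y : M S) : S = T -> (mcast x == mcast y :> M T) = (x == y).
Proof. by move=> e; subst T; rewrite !mcast_id. Qed.

Lemma mcast0 S T : (mcast (0 : M S) : M T) = 0.
Proof. by rewrite /mcast; case: eqP => // e; subst T. Qed.

Lemma mcastD S T (x y : M S) : (mcast (x + y) : M T) = mcast x + mcast y.
Proof. by rewrite /mcast; case: eqP => // e; [subst T | rewrite addr0]. Qed.

Lemma mcast_sum S T (I : Type) (r : seq I) (P : pred I) (F : I -> M S) :
  (mcast (\sum_(i <- r | P i) F i) : M T) = \sum_(i <- r | P i) mcast (F i).
Proof. exact: (big_morph _ (@mcastD S T) (@mcast0 S T)). Qed.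

Variable phi : forall S A B : {fset nat}, M (S `\` B) -> M (S `\` A).
Arguments phi : clear implicits.

Lemma mcast_phi S S' A A' B B' (x : M (S `\` B)) U : S = S' -> A = A' -> B = B' ->
  (mcast (phi S A B x) : M U) = mcast (phi S' A' B' (mcast x)).
Proof. by move=> e1 e2 e3; subst; rewrite mcast_id. Qed.

Hypothesis phi_lin : phi_linear phi.

Lemma phiD S A B (x y : M (S `\` B)) : phi S A B (x + y) = phi S A B x + phi S A B y.
Proof. by have := @phi_lin S A B 1 x y; rewrite !scale1r. Qed.

Lemma phi0 S A B : phi S A B 0 = 0.
Proof. by apply: (@addrI _ (phi S A B 0)); rewrite -phiD !addr0. Qed.

Lemma phi_sum S A B (I : Type) (r : seq I) (P : pred I) (F : I -> M (S `\` B)) :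
  phi S A B (\sum_(i <- r | P i) F i) = \sum_(i <- r | P i) phi S A B (F i).
Proof. exact: (big_morph _ (@phiD S A B) (@phi0 S A B)). Qed.

End Cast.

Lemma big_seq_bij (R : Type) (idx : R) (op : Monoid.com_law idx) (I J : eqType)
    (s : seq I) (t : seq J) (P : pred I) (Q : pred J) (h : I -> J) (h' : J -> I) (F : J -> R) :
  uniq s -> uniq t ->
  (forall x, x \in s -> P x -> [/\ h x \in t, Q (h x) & h' (h x) = x]) ->
  (forall y, y \in t -> Q y -> [/\ h' y \in s, P (h' y) & h (h' y) = y]) ->
  \big[op/idx]_(x <- s | P x) F (h x) = \big[op/idx]_(y <- t | Q y) F y.
Proof.
move=> us ut hK h'K; rewrite -[RHS]big_filter -[LHS]big_filter.
transitivity (\big[op/idx]_(y <- map h [seq x <- s | P x]) F y); first by rewrite big_map.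
apply: perm_big; apply: uniq_perm; [| exact: filter_uniq |].
- rewrite map_inj_in_uniq ?filter_uniq // => x1 x2.
  rewrite !mem_filter => /andP [P1 s1] /andP [P2 s2] e.
  by have [_ _ <-] := hK x1 s1 P1; have [_ _ <-] := hK x2 s2 P2; rewrite e.
- move=> y; rewrite mem_filter; apply/mapP/andP => [[x] | [Qy yt]].
    by rewrite mem_filter => /andP [Px xs] ->; have [] := hK x xs Px.
  by have [h'y Ph' hh'] := h'K y yt Qy; exists (h' y); rewrite ?mem_filter ?Ph'.
Qed.

Lemma big_fpowerset_sub (R : nmodType) (S T : {fset nat}) (F : {fset nat} -> R) :
  T `<=` S -> \sum_(X <- fpowerset T) F X = \sum_(X <- fpowerset S | X `<=` T) F X.
Proof.
move=> sTS; apply: eq_fbigl_cond => X; rewrite !inE /= !fpowersetE andbT.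
by apply/idP/idP => [sXT | /andP [] //]; rewrite sXT (fsubset_trans sXT sTS).
Qed.

Lemma eq_big_fpowerset (R : nmodType) (S : {fset nat}) (P : pred {fset nat})
    (F G : {fset nat} -> R) :
  (forall X, X `<=` S -> P X -> F X = G X) ->
  \sum_(X <- fpowerset S | P X) F X = \sum_(X <- fpowerset S | P X) G X.
Proof. by move=> eqFG; apply: eq_fbigr => X; rewrite fpowersetE; apply: eqFG. Qed.

Lemma fpowersetD_disj (S B X : {fset nat}) :
  (X \in fpowerset (S `\` B)) = (X \in fpowerset S) && disj X B.
Proof. by rewrite fpowersetCE fpowersetE. Qed.

Section WeylCoefficients.
Local Unset Implicit Arguments.
Context {k : comPzRingType} {M : {fset nat} -> lmodType k}.
Context {a : forall S, PM M S -> PM M S}.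
Context {phi : forall S A B : {fset nat}, M (S `\` B) -> M (S `\` A)}.
Hypotheses (phi_lin : phi_linear phi) (a_phi : assoc_op phi a).

Definition coef_sum {S} {V : nmodType}
    (c : forall P Q, M (S `\` (P `|` Q)) -> V) (f : PPM M S) : V :=
  \sum_(P <- fpowerset S) \sum_(Q <- fpowerset S | disj P Q) c P Q (f P Q).

Definition a1a2_coef S B1 B2 P Q (x : M (S `\` (P `|` Q))) : M (S `\` (B1 `|` B2)) :=
  if disj P B2 then mcast (phi (S `\` B2) B1 P (mcast (phi (S `\` P) B2 Q (mcast x)))) else 0.

Lemma a1a2E S (f : PPM M S) B1 B2 : B1 `<=` S -> B2 `<=` S -> disj B1 B2 ->
  a1 a (a2 a f) B1 B2 = coef_sum (a1a2_coef S B1 B2) f.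
Proof.
move=> sB1 sB2 dB12; rewrite /a1 /a2 /tau2 /idPa /coef_sum a_phi; last by fset_solve.
rewrite !mcast_sum [RHS](bigID (fun P => disj P B2)) /= [X in _ + X]big1 ?addr0; last first.
  by move=> P /negbTE dPB; apply: big1 => Q _; rewrite /a1a2_coef dPB.
apply: eq_fbig_cond => [P | P]; first by rewrite !inE /= fpowersetCE !fpowersetE andbT.
rewrite fpowersetD_disj => /andP [_ dPB] _.
rewrite !mcastK; [| fset_solve ..].
rewrite a_phi; last by fset_solve.
rewrite mcast_sum (phi_sum phi_lin) mcast_sum; apply: eq_fbig_cond => [Q | Q _ _].
  by rewrite !inE /= fpowersetCE !fpowersetE andbT disjC.
by rewrite /a1a2_coef dPB.
Qed.

Definition a2a1_coef S B1 B2 P Q (x : M (S `\` (P `|` Q))) : M (S `\` (B1 `|` B2)) :=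
  if disj Q B1 then mcast (phi (S `\` B1) B2 Q (mcast (phi (S `\` Q) B1 P (mcast x)))) else 0.

Lemma a2a1E S (f : PPM M S) B1 B2 : B1 `<=` S -> B2 `<=` S -> disj B1 B2 ->
  a2 a (a1 a f) B1 B2 = coef_sum (a2a1_coef S B1 B2) f.
Proof.
move=> sB1 sB2 dB12; rewrite /a1 /a2 /tau2 /idPa /coef_sum a_phi; last by fset_solve.
rewrite (exchange_big_dep predT) //= !mcast_sum.
rewrite [RHS](bigID (fun Q => disj Q B1)) /= [X in _ + X]big1 ?addr0; last first.
  by move=> Q /negbTE dQB; apply: big1 => P _; rewrite /a2a1_coef dQB.
apply: eq_fbig_cond => [Q | Q]; first by rewrite !inE /= fpowersetCE !fpowersetE andbT.
rewrite fpowersetD_disj => /andP [_ dQB] _.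
rewrite !mcastK; [| fset_solve ..].
rewrite a_phi; last by fset_solve.
rewrite mcast_sum (phi_sum phi_lin) mcast_sum; apply: eq_fbig_cond => [P | P _ _].
  by rewrite !inE /= fpowersetCE !fpowersetE andbT.
by rewrite /a2a1_coef dQB mcastK //; fset_solve.
Qed.

Definition contract_term S B1 B2 X P Q (x : M (S `\` (P `|` Q))) : M (S `\` (B1 `|` B2)) :=
  mcast (phi (S `\` X) ((B1 `\` X) `|` B2) (P `|` (Q `\` X)) (mcast x)).

Definition a'_coef S B1 B2 P Q (x : M (S `\` (P `|` Q))) : M (S `\` (B1 `|` B2)) :=
  \sum_(X <- fpowerset (Q `&` B1)) contract_term S B1 B2 X P Q x.

Definition a''_coef S B1 B2 P Q (x : M (S `\` (P `|` Q))) : M (S `\` (B1 `|` B2)) :=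
  mcast (a'_coef S B2 B1 Q P (mcast x)).

Lemma a'_contractE S (f : PPM M S) B1 B2 : B1 `<=` S -> B2 `<=` S -> disj B1 B2 ->
  a' a f B1 B2 = \sum_(E <- fpowerset B1) \sum_(P <- fpowerset S)
     \sum_(Q <- fpowerset S | disj P Q && (E `<=` Q)) contract_term S B1 B2 E P Q (f P Q).
Proof.
move=> sB1 sB2 dB12; rewrite /a' /midid /idDelta /idPa /idm /tau3.
apply: eq_big_fpowerset => E sEB1 _.
rewrite !mcastK; [| fset_solve ..].
rewrite a_phi; last by fset_solve.
rewrite mcast_sum (big_fpowerset_sub _ (S := S)); last by fset_solve.
under eq_big_fpowerset => B sBS _.
  by rewrite mcast_sum (phi_sum phi_lin) mcast_sum (big_fpowerset_sub _ sBS); over.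
rewrite (exchange_big_dep predT) //=; apply: eq_big_fpowerset => P sPS _.
transitivity (\sum_(B <- fpowerset S | (B `<=` S `\` E) && (P `<=` B))
    contract_term S B1 B2 E P (E `|` (B `\` P)) (f P (E `|` (B `\` P)))).
  apply: eq_big_fpowerset => B _ /andP [sBSE sPB].
  rewrite /contract_term (mcast_phi phi (S' := S `\` E) (A' := (B1 `\` E) `|` B2)
    (B' := P `|` ((E `|` (B `\` P)) `\` E))) //; last by fset_solve.
  by rewrite !mcastK //; fset_solve.
apply: (@big_seq_bij _ _ _ _ _ _ _ _ _ (fun B => E `|` (B `\` P)) (fun Q => P `|` (Q `\` E))
  (fun Q => contract_term S B1 B2 E P Q (f P Q))); try exact: fset_uniq.
- move=> B; rewrite (@fpowersetE nat) => sBS /andP [sBSE sPB].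
  by split; [rewrite fpowersetE; fset_solve | apply/andP; split; fset_solve | fset_solve].
- move=> Q; rewrite (@fpowersetE nat) => sQS /andP [dPQ sEQ].
  by split; [rewrite fpowersetE; fset_solve | apply/andP; split; fset_solve | fset_solve].
Qed.

Lemma a'E S (f : PPM M S) B1 B2 : B1 `<=` S -> B2 `<=` S -> disj B1 B2 ->
  a' a f B1 B2 = coef_sum (a'_coef S B1 B2) f.
Proof.
move=> sB1 sB2 dB12; rewrite a'_contractE // exchange_big /=; apply: eq_bigr => P _.
rewrite (exchange_big_dep (disj P)) /=; last by move=> ? ? _ /andP [].
apply: eq_bigr => Q dPQ; rewrite /a'_coef (big_fpowerset_sub _ (S := B1)); last by fset_solve.
apply: eq_fbigl_cond => X; rewrite !inE /= fpowersetE dPQ fsubsetI.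
by case: (X `<=` B1); rewrite ?andbT ?andbF.
Qed.

Lemma a''E S (f : PPM M S) B1 B2 : B1 `<=` S -> B2 `<=` S -> disj B1 B2 ->
  a'' a f B1 B2 = coef_sum (a''_coef S B1 B2) f.
Proof.
move=> sB1 sB2 dB12; rewrite /a'' {1}/tau2 a'E 1?disjC // /coef_sum mcast_sum.
rewrite (exchange_big_dep predT) //=; apply: eq_bigr => P _.
by rewrite mcast_sum; apply: eq_big => // Q; rewrite disjC.
Qed.

Lemma contract_term0 S B1 B2 X P Q : contract_term S B1 B2 X P Q 0 = 0.
Proof. by rewrite /contract_term !(mcast0, phi0 phi_lin). Qed.

Lemma a1a2_coef0 S B1 B2 P Q : a1a2_coef S B1 B2 P Q 0 = 0.
Proof. by rewrite /a1a2_coef !(mcast0, phi0 phi_lin) if_same. Qed.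

Lemma a2a1_coef0 S B1 B2 P Q : a2a1_coef S B1 B2 P Q 0 = 0.
Proof. by rewrite /a2a1_coef !(mcast0, phi0 phi_lin) if_same. Qed.

Lemma a'_coef0 S B1 B2 P Q : a'_coef S B1 B2 P Q 0 = 0.
Proof. by rewrite /a'_coef big1 // => X _; rewrite contract_term0. Qed.

Lemma a''_coef0 S B1 B2 P Q : a''_coef S B1 B2 P Q 0 = 0.
Proof. by rewrite /a''_coef mcast0 a'_coef0 mcast0. Qed.

Definition pure_tensor S P Q (x : M (S `\` (P `|` Q))) : PPM M S :=
  fun P' Q' => if (P' == P) && (Q' == Q) then mcast x else 0.

Lemma coef_sum_pure_tensor S (V : nmodType)
    (c : forall P Q, M (S `\` (P `|` Q)) -> V) P Q x :
  (forall P Q, c P Q 0 = 0) -> P `<=` S -> Q `<=` S -> disj P Q ->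
  coef_sum c (pure_tensor S P Q x) = c P Q x.
Proof.
move=> c0 sPS sQS dPQ; rewrite /coef_sum (bigD1_seq P) ?fset_uniq ?fpowersetE //=.
rewrite [X in _ + X]big1 ?addr0 => [|P' /negbTE nP]; last first.
  by apply: big1 => Q' _; rewrite /pure_tensor nP c0.
rewrite big_mkcond (bigD1_seq Q) ?fset_uniq ?fpowersetE //= [X in _ + X]big1 ?addr0.
  by rewrite /pure_tensor dPQ !eqxx mcast_id.
by move=> Q' /negbTE nQ; rewrite /pure_tensor nQ andbF c0; case: ifP.
Qed.

Definition coef_identity S B1 B2 P Q (x : M (S `\` (P `|` Q))) : Prop :=
  a1a2_coef S B1 B2 P Q x - a2a1_coef S B1 B2 P Q x
  = a'_coef S B1 B2 P Q x - a''_coef S B1 B2 P Q x.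

Definition coef_identities : Prop :=
  forall S B1 B2 P Q, B1 `<=` S -> B2 `<=` S -> disj B1 B2 ->
    P `<=` S -> Q `<=` S -> disj P Q -> forall x, coef_identity S B1 B2 P Q x.

Lemma weyl_rep_coefP : weyl_rep a <-> coef_identities.
Proof.
split=> [Hw S B1 B2 P Q sB1 sB2 dB12 sP sQ dPQ x | Hc S f B1 B2 sB1 sB2 /eqP dB12].
  have := Hw S (pure_tensor S P Q x) B1 B2 sB1 sB2 (eqP dB12).
  rewrite a1a2E // a2a1E // a'E // a''E //.
  by rewrite !coef_sum_pure_tensor // => *;
    rewrite ?a1a2_coef0 ?a2a1_coef0 ?a'_coef0 ?a''_coef0.
rewrite a1a2E // a2a1E // a'E // a''E // /coef_sum -!sumrB.
apply: eq_big_fpowerset => P sP _; rewrite -!sumrB.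
by apply: eq_big_fpowerset => Q sQ dPQ; apply: Hc.
Qed.

Lemma a'_coef_split S B1 B2 P Q x : a'_coef S B1 B2 P Q x =
  contract_term S B1 B2 fset0 P Q x
  + \sum_(X <- fpowerset (Q `&` B1) | X != fset0) contract_term S B1 B2 X P Q x.
Proof. by rewrite /a'_coef (bigD1_seq fset0) ?fset_uniq // fpowersetE fsub0set. Qed.

Lemma a'_coef_disj S B1 B2 P Q x :
  disj Q B1 -> a'_coef S B1 B2 P Q x = contract_term S B1 B2 fset0 P Q x.
Proof. by move=> /eqP QB1; rewrite /a'_coef QB1 fpowerset0 big_seq_fset1. Qed.

Lemma contract_term0_swap S B1 B2 P Q x :
  mcast (contract_term S B2 B1 fset0 Q P (mcast x)) = contract_term S B1 B2 fset0 P Q x.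
Proof.
rewrite /contract_term mcastK; last by fset_solve.
rewrite (mcast_phi phi (S' := S `\` fset0) (A' := (B1 `\` fset0) `|` B2)
  (B' := P `|` (Q `\` fset0))); [| fset_solve ..].
by rewrite !mcastK //; fset_solve.
Qed.

Lemma a''_coef_split S B1 B2 P Q x : a''_coef S B1 B2 P Q x =
  contract_term S B1 B2 fset0 P Q x
  + mcast (\sum_(X <- fpowerset (P `&` B2) | X != fset0) contract_term S B2 B1 X Q P (mcast x)).
Proof. by rewrite /a''_coef a'_coef_split mcastD contract_term0_swap. Qed.

Lemma a''_coef_disj S B1 B2 P Q x :
  disj P B2 -> a''_coef S B1 B2 P Q x = contract_term S B1 B2 fset0 P Q x.
Proof. by move=> dPB2; rewrite /a''_coef a'_coef_disj // contract_term0_swap. Qed.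

Lemma mcast_sum_contract S B1 B2 P Q (R : pred {fset nat}) x :
  (mcast (\sum_(X <- fpowerset (Q `&` B1) | R X) contract_term S B1 B2 X P Q x)
    : M (S `\` (B2 `|` B1)))
  = \sum_(X <- fpowerset (Q `&` B1) | R X)
      mcast (phi (S `\` X) ((B1 `\` X) `|` B2) (P `|` (Q `\` X)) (mcast x)).
Proof.
rewrite mcast_sum; apply: eq_big_fpowerset => X sX _.
by rewrite /contract_term mcastK //; fset_solve.
Qed.

Lemma mcastUC S P Q U (x : M (S `\` (P `|` Q))) :
  (mcast (mcast x : M (S `\` (Q `|` P))) : M U) = mcast x.
Proof. by rewrite mcastK // fsetUC. Qed.

Definition condB1_at S A B C D (x : M (S `\` (A `|` B))) : Prop :=
  (mcast (phi (S `\` C) D A (mcast (phi (S `\` A) C B (mcast x)))) : M (S `\` (C `|` D)))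
  = mcast (phi (S `\` D) C B (mcast (phi (S `\` B) D A (mcast x)))).

Definition condB2_at S A B C D (x : M (S `\` (A `|` B))) : Prop :=
  (mcast (phi (S `\` C) D A (mcast (phi (S `\` A) C B (mcast x)))) : M (S `\` (C `|` D)))
  = \sum_(X <- fpowerset (B `&` D) | X != fset0)
      mcast (phi (S `\` X) ((D `\` X) `|` C) (A `|` (B `\` X)) (mcast x)).

Definition condB3_at S A B C D (x : M (S `\` (A `|` B))) : Prop :=
  (\sum_(X <- fpowerset (B `&` D))
      mcast (phi (S `\` X) ((D `\` X) `|` C) (A `|` (B `\` X)) (mcast x))
    : M (S `\` (C `|` D)))
  = \sum_(X <- fpowerset (A `&` C))
      mcast (phi (S `\` X) ((C `\` X) `|` D) (B `|` (A `\` X)) (mcast x)).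

Lemma coef_identity_B1 S B1 B2 P Q x : disj P B2 -> disj Q B1 ->
  coef_identity S B1 B2 P Q x <-> condB1_at S P Q B2 B1 x.
Proof.
move=> dPB2 dQB1; apply: eqb_iff.
rewrite a'_coef_disj // a''_coef_disj // subrr subr_eq0.
rewrite -[LHS](eq_mcast (T := S `\` (B2 `|` B1))); last by fset_solve.
by rewrite /a1a2_coef /a2a1_coef dPB2 dQB1 !mcastK; [| fset_solve ..].
Qed.

Lemma coef_identity_B2 S B1 B2 P Q x : disj P B2 -> ~~ disj Q B1 ->
  coef_identity S B1 B2 P Q x <-> condB2_at S P Q B2 B1 x.
Proof.
move=> dPB2 /negbTE dQB1; apply: eqb_iff.
rewrite a'_coef_split a''_coef_disj // /a2a1_coef dQB1 subr0 addrAC subrr add0r.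
rewrite -[LHS](eq_mcast (T := S `\` (B2 `|` B1))); last by fset_solve.
by rewrite mcast_sum_contract /a1a2_coef dPB2 mcastK //; fset_solve.
Qed.

Lemma coef_identity_B2_swap S B1 B2 P Q x : ~~ disj P B2 -> disj Q B1 ->
  coef_identity S B1 B2 P Q x <-> condB2_at S Q P B1 B2 (mcast x).
Proof.
move=> /negbTE dPB2 dQB1; apply: eqb_iff.
rewrite a'_coef_disj // a''_coef_split /a1a2_coef dPB2 sub0r opprD addrA subrr add0r.
rewrite eqr_opp mcast_sum_contract /a2a1_coef dQB1 mcastUC.
(* Not [by []]: the two sides use different, convertible, eqType instances. *)
reflexivity.
Qed.

Lemma coef_identity_B3 S B1 B2 P Q x : ~~ disj P B2 -> ~~ disj Q B1 ->
  coef_identity S B1 B2 P Q x <-> condB3_at S P Q B2 B1 x.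
Proof.
move=> /negbTE dPB2 /negbTE dQB1; apply: eqb_iff.
rewrite /a1a2_coef /a2a1_coef dPB2 dQB1 subrr eq_sym subr_eq0.
rewrite -[LHS](eq_mcast (T := S `\` (B2 `|` B1))); last by fset_solve.
rewrite (mcast_sum_contract _ _ _ _ _ predT) /a''_coef mcastK ?mcast_id; last by fset_solve.
rewrite /a'_coef /contract_term.
under [X in _ == X]eq_bigr => X _ do rewrite mcastUC.
reflexivity.
Qed.

Lemma coef_identities_condsP :
  coef_identities <-> [/\ condB1 phi, condB2 phi & condB3 phi].
Proof.
split=> [coefP | [B1P B2P B3P] S B1 B2 P Q sB1 sB2 dB12 sP sQ dPQ x].
  split=> S A B C D sA sB sC sD dAB dCD dAC dBD x;
    have dDC : disj D C by rewrite disjC.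
  - by apply/(coef_identity_B1 S D C A B x dAC dBD); apply: coefP.
  - by apply/(coef_identity_B2 S D C A B x dAC dBD); apply: coefP.
  - by apply/(coef_identity_B3 S D C A B x dAC dBD); apply: coefP.
have dB21 : disj B2 B1 by rewrite disjC.
have dQP : disj Q P by rewrite disjC.
case dPB2: (disj P B2); case dQB1: (disj Q B1).
- by apply/(coef_identity_B1 S B1 B2 P Q x dPB2 dQB1); apply: B1P.
- by apply/(coef_identity_B2 S B1 B2 P Q x dPB2 (negbT dQB1)); apply: B2P; rewrite ?dQB1.
- by apply/(coef_identity_B2_swap S B1 B2 P Q x (negbT dPB2) dQB1); apply: B2P; rewrite ?dPB2.
- by apply/(coef_identity_B3 S B1 B2 P Q x (negbT dPB2) (negbT dQB1)); apply: B3P;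
    rewrite ?dPB2 ?dQB1.
Qed.

End WeylCoefficients.

Theorem proposition7p4 (k : comPzRingType) (M : {fset nat} -> lmodType k)
  (Mact : forall S T : {fset nat}, (nat -> nat) -> M S -> M T)
  (HM : isFBmod Mact)
  (a : forall S, PM M S -> PM M S)
  (phi : forall S A B : {fset nat}, M (S `\` B)%fset -> M (S `\` A)%fset)
  (Hlin : phi_linear phi) (Hnat : phi_natural phi Mact)
  (Ha : assoc_op phi a) :
  weyl_rep a <-> [/\ condB1 phi, condB2 phi & condB3 phi].
Proof. exact: iff_trans (weyl_rep_coefP Hlin Ha) coef_identities_condsP. Qed.
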